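(* Let $\mathcal F_2$ be the set of the following five graphs: the path $P_4$; $K_5\setminus S_2$ (the complete graph on 5 vertices with the two edges of a path $uvw$ removed); $K_6\setminus M_2$ (the complete graph on 6 vertices with two disjoint edges removed); the graph on vertices $1,\dots,5$ with edges $23,24,34,14,45$ (a triangle with two pendant vertices attached to the same triangle vertex); and the graph on vertices $1,\dots,5$ with edges $12,14,23,24,34,45$ (the diamond $K_4$ minus edge $13$ with a pendant vertex attached to the degree-3 vertex $4$). A simple connected graph $G$ is $\mathcal F_2$-free (no induced subgraph of $G$ is isomorphic to a member of $\mathcal F_2$) if and only if $G$ is an induced subgraph of $K_{m,n,o}$ or of $T_n\vee(K_m+K_o)$ for some non-negative integers $m,n,o$.
   Context: $K_{m,n,o}$ is the complete tripartite graph with parts of sizes $m,n,o$; $T_n$ is the edgeless graph on $n$ vertices; $K_m$ the complete graph on $m$ vertices; $G+H$ is the disjoint union and $G\vee H$ the join (disjoint union plus all edges between $G$ and $H$). *)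

(* simple graphs as symmetric irreflexive boolean relations on finTypes. *)
From mathcomp Require Import all_boot.
Set Implicit Arguments. Unset Strict Implicit. Unset Printing Implicit Defensive.

Definition induced_sub (T1 : finType) (e1 : rel T1) (T2 : finType) (e2 : rel T2) : Prop :=
  exists f : T1 -> T2, injective f /\ forall x y, e2 (f x) (f y) = e1 x y.

Definition connected_graph (T : finType) (e : rel T) : Prop :=
  forall x y : T, connect e x y.

Definition in_edges (s : seq (nat * nat)) (i j : nat) : bool :=
  ((i, j) \in s) || ((j, i) \in s).

Definition P4 : rel 'I_4 := fun i j => in_edges [:: (0,1); (1,2); (2,3)] i j.
Definition K5_minus_S2 : rel 'I_5 :=
  fun i j => (i != j) && ~~ in_edges [:: (0,1); (1,2)] i j.
Definition K6_minus_M2 : rel 'I_6 :=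
  fun i j => (i != j) && ~~ in_edges [:: (0,1); (2,3)] i j.
(* vertices 1..5 relabelled 0..4: edges 23,24,34,14,45 *)
Definition F2_4 : rel 'I_5 :=
  fun i j => in_edges [:: (1,2); (1,3); (2,3); (0,3); (3,4)] i j.
(* vertices 1..5 relabelled 0..4: edges 12,14,23,24,34,45 *)
Definition F2_5 : rel 'I_5 :=
  fun i j => in_edges [:: (0,1); (0,3); (1,2); (1,3); (2,3); (3,4)] i j.

Definition F2_free (T : finType) (e : rel T) : Prop :=
  ~ induced_sub P4 e /\ ~ induced_sub K5_minus_S2 e /\ ~ induced_sub K6_minus_M2 e /\
  ~ induced_sub F2_4 e /\ ~ induced_sub F2_5 e.

Definition part3 (A B C : Type) (x : A + (B + C)) : nat :=
  match x with inl _ => 0 | inr (inl _) => 1 | inr (inr _) => 2 end.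

Definition Kmno (m n o : nat) : rel ('I_m + ('I_n + 'I_o))%type :=
  fun x y => part3 x != part3 y.

(* T_n \/ (K_m + K_o): part 0 is the independent set T_n, parts 1,2 are cliques K_m, K_o *)
Definition Tjoin (n m o : nat) : rel ('I_n + ('I_m + 'I_o))%type :=
  fun x y => (x != y) &&
    (if (part3 x == 0) || (part3 y == 0) then part3 x != part3 y
     else part3 x == part3 y).
Arguments Kmno : clear implicits.
Arguments Tjoin : clear implicits.

From mathcomp Require Import all_boot.
Set Implicit Arguments. Unset Strict Implicit. Unset Printing Implicit Defensive.

(* An induced subgraph of K_{m,n,o} or of T_n \/ (K_m + K_o) is the same thing
   as a graph described by a colouring with three colours, and such a
   description restricts to induced subgraphs; so each forbidden graph is
   excluded by running through its 3^k colourings.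
   Conversely let G be connected and F2-free.  If the vertices having a
   non-neighbour are pairwise non-adjacent, G is T_n \/ K_m.  Otherwise pick
   two adjacent such vertices x and y.  If non-adjacency is transitive, G is
   complete multipartite and, K6 - M2 being excluded, the common neighbours of
   x and y form a single part: G is K_{m,n,o}.  If not, G contains an induced
   K1 + K2 = {b} + {a c}.  By Seinsche's theorem the complement of the
   connected P4-free graph G is disconnected, so some side A containing b is
   completely joined to its nonempty complement.  Then K5 - S2 forces the
   complement of A to be independent and, together with F2_4 and F2_5, A to
   have no independent triple; finally P4 splits A into the two cliques
   formed by b with its neighbours and by its non-neighbours, with no edge
   between them: G is T_n \/ (K_m + K_o). *)

Definition multipartite (T : Type) (p : T -> nat) : rel T := fun x y => p x != p y.

(* The colour class 0 is the independent set T_n, joined to the disjoint union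
   of the cliques formed by the other colour classes. *)
Definition coclique_join (T : eqType) (p : T -> nat) : rel T :=
  fun x y => (x != y) &&
    (if (p x == 0) || (p y == 0) then p x != p y else p x == p y).

(* The colouring [p] exhibits [e] as an induced subgraph of K_{m,n,o} or of
   T_n \/ (K_m + K_o), see [Kmno_TjoinP]. *)
Definition KT_coloured (T : finType) (e : rel T) (p : T -> nat) : Prop :=
  (forall x, p x < 3) /\ (e =2 multipartite p \/ e =2 coclique_join p).

Lemma KT_coloured_induced (T1 T2 : finType) (e1 : rel T1) (e2 : rel T2) p :
  induced_sub e1 e2 -> KT_coloured e2 p -> exists q, KT_coloured e1 q.
Proof.
move=> [f [finj fE]] [p3 e2p]; exists (p \o f); split=> [x|]; first exact: p3.
by case: e2p => e2p; [left | right] => x y; rewrite -fE e2p /coclique_join ?(inj_eq finj).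
Qed.

Lemma part3_lt (A B C : Type) (x : A + (B + C)) : part3 x < 3.
Proof. by case: x => [?|[?|?]]. Qed.

Section PartEmbedding.
Variables (T : finType) (p : T -> nat).

Definition part_embedding (x : T) : 'I_#|T| + ('I_#|T| + 'I_#|T|) :=
  let i := enum_rank x in
  if p x == 0 then inl i else if p x == 1 then inr (inl i) else inr (inr i).

Lemma part3_embedding x : p x < 3 -> part3 (part_embedding x) = p x.
Proof. by rewrite /part_embedding; case: (p x) => [|[|[|]]]. Qed.

Lemma part_embedding_inj : injective part_embedding.
Proof.
pose rank (z : 'I_#|T| + ('I_#|T| + 'I_#|T|)) :=
  match z with inl i | inr (inl i) | inr (inr i) => i end.
move=> x y /(congr1 rank); rewrite /part_embedding.
by do 4?case: ifP => _; move/enum_rank_inj.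
Qed.

End PartEmbedding.

Lemma Kmno_TjoinP (T : finType) (e : rel T) :
  (exists m n o : nat, induced_sub e (Kmno m n o) \/ induced_sub e (Tjoin n m o)) <->
  exists p, KT_coloured e p.
Proof.
split=> [[m [n [o [] emb]]] | [p [p3 ep]]].
- by apply: KT_coloured_induced emb _; split; [exact: part3_lt | left].
- by apply: KT_coloured_induced emb _; split; [exact: part3_lt | right].
exists #|T|, #|T|, #|T|.
case: ep => ep; [left | right]; exists (part_embedding p);
  split=> [|x y]; do ?exact: part_embedding_inj.
  by rewrite ep /Kmno !part3_embedding.
by rewrite ep /Tjoin !part3_embedding // (inj_eq (@part_embedding_inj _ p)).
Qed.

Definition colourings3 (k : nat) : seq (seq nat) :=
  iter k (fun ss => [seq c :: s | c <- iota 0 3, s <- ss]) [:: [::]].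

Lemma mem_colourings3 s : all (gtn 3) s -> s \in colourings3 (size s).
Proof.
elim: s => // c s IHs /andP[c3 s3].
by apply: (allpairs_f cons); [rewrite mem_iota | exact: IHs].
Qed.

(* [ord_enum] goes through [insub], whose test is the opaque [idP] and blocks
   [vm_compute]; this enumeration of ['I_n.+1] reduces. *)
Definition ords n : seq 'I_n.+1 := mkseq (fun i => Ordinal (ltn_pmod i (ltn0Sn n))) n.+1.

Definition agree_on (T : Type) (xs : seq T) (e e' : rel T) : bool :=
  all (fun x => all (fun y => e x y == e' x y) xs) xs.

Definition KT_colourableb n (F : rel 'I_n.+1) : bool :=
  has (fun s => let p (i : 'I_n.+1) := nth 0 s i in
         agree_on (ords n) F (multipartite p) || agree_on (ords n) F (coclique_join p))
      (colourings3 n.+1).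

Lemma KT_coloured_colourableb n (F : rel 'I_n.+1) p : KT_coloured F p -> KT_colourableb F.
Proof.
move=> [p3 Fp]; pose s := mkseq (fun i => p (inord i)) n.+1.
have sp (i : 'I_n.+1) : nth 0 s i = p i by rewrite nth_mkseq // inord_val.
apply/hasP; exists s.
  rewrite -[n.+1](size_mkseq (fun i => p (inord i))); apply: mem_colourings3.
  by apply/allP => _ /mapP[i _ ->]; exact: p3.
have agree e' : F =2 e' -> agree_on (ords n) F e'.
  by move=> Fe'; apply/allP => x _; apply/allP => y _; rewrite Fe'.
by case: Fp => Fp; apply/orP; [left | right]; apply: agree => x y;
  rewrite Fp /multipartite /coclique_join !sp.
Qed.

Lemma not_induced_sub_KT_coloured n (F : rel 'I_n.+1) (T : finType) (e : rel T) p :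
  ~~ KT_colourableb F -> KT_coloured e p -> ~ induced_sub F e.
Proof.
by move=> nF ep /KT_coloured_induced /(_ ep) [q /KT_coloured_colourableb]; apply/negP.
Qed.

Lemma KT_coloured_F2_free (T : finType) (e : rel T) p : KT_coloured e p -> F2_free e.
Proof.
by move=> ep; do ![split | apply: (not_induced_sub_KT_coloured _ ep); vm_compute].
Qed.

Lemma induced_sub_seq (T : finType) (e : rel T) k (F : rel 'I_k) (s : seq T) (x0 : T) :
  size s = k -> uniq s -> (forall i j : 'I_k, e (nth x0 s i) (nth x0 s j) = F i j) ->
  induced_sub F e.
Proof.
move=> sz us es; exists (fun i : 'I_k => nth x0 s i); split=> // i j /eqP.
by rewrite nth_uniq ?sz // => /eqP /val_inj.
Qed.

(* Embeds one of the forbidden graphs along the vertex list [s]; the needed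
   adjacencies, non-adjacencies and distinctness facts must be in the context
   (distinctness may also come from an adjacency, by irreflexivity). *)
Ltac embed s esym eirr :=
  let x0 := match s with ?a :: _ => a end in
  apply: (@induced_sub_seq _ _ _ _ s x0); [ done
  | rewrite /= ?inE ?negb_or; repeat (apply/andP; split); try done;
    match goal with |- is_true (?a != ?b) =>
      first [ by rewrite eq_sym
            | match goal with H : is_true (_ a b) |- _ =>
                by apply: contraTneq H => ->; rewrite eirr end
            | match goal with H : is_true (_ b a) |- _ =>
                by apply: contraTneq H => ->; rewrite eirr end ]
    end
  | move=> [[|[|[|[|[|[|?]]]]]] ?] [[|[|[|[|[|[|?]]]]]] ?] //;
    rewrite /= ?eirr /P4 /K5_minus_S2 /K6_minus_M2 /F2_4 /F2_5 /in_edges /=;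
    first [ done | exact/negbTE | by rewrite esym | by rewrite esym; exact/negbTE ] ].

Definition compl_rel (T : eqType) (e : rel T) : rel T := fun x y => (x != y) && ~~ e x y.

Lemma compl_rel_sym (T : eqType) (e : rel T) : symmetric e -> symmetric (compl_rel e).
Proof. by move=> esym x y; rewrite /compl_rel eq_sym esym. Qed.

Lemma compl_rel_irr (T : eqType) (e : rel T) : irreflexive (compl_rel e).
Proof. by move=> x; rewrite /compl_rel eqxx. Qed.

Lemma negb_compl_rel (T : eqType) (e : rel T) x y : ~~ compl_rel e x y = (x == y) || e x y.
Proof. by rewrite /compl_rel negb_and !negbK. Qed.

Lemma P4_free_compl (T : finType) (e : rel T) : irreflexive e ->
  ~ induced_sub P4 e -> ~ induced_sub P4 (compl_rel e).
Proof.
move=> eirr eP4 [g [ginj gE]]; apply: eP4.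
have ge i j : i != j -> e (g i) (g j) = ~~ P4 i j.
  by move=> ij; rewrite -gE /compl_rel (inj_eq ginj) ij negbK.
(* P4 is self-complementary: the complement of 0-1-2-3 is the path 2-0-3-1. *)
pose o i (lti : i < 4) := g (Ordinal lti).
apply: (@induced_sub_seq _ _ _ _ [:: o 2 isT; o 0 isT; o 3 isT; o 1 isT] (o 0 isT)) => //.
  by rewrite /= !inE !(inj_eq ginj).
by move=> [[|[|[|[|?]]]] ?] [[|[|[|[|?]]]] ?] //=; rewrite ?eirr ge.
Qed.

Definition separates (T : finType) (R : rel T) (S A : {set T}) : Prop :=
  [/\ A \subset S, A != set0, S :\: A != set0 & {in A & S :\: A, forall x y, ~~ R x y}].

Definition disconnected_on (T : finType) (R : rel T) (S : {set T}) : Prop :=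
  exists A, separates R S A.

Section Separation.
Variables (T : finType) (R : rel T).
Hypotheses (Rsym : symmetric R) (Rirr : irreflexive R) (RP4 : ~ induced_sub P4 R).

Lemma separatesC S A : separates R S A -> separates R S (S :\: A).
Proof.
move=> [AS An BS sep]; have SBA : S :\: (S :\: A) = A.
  by rewrite setDDr setDv set0U (setIidPr AS).
split; rewrite ?SBA ?subsetDl // => x y xB yA.
by rewrite Rsym sep.
Qed.

(* If [v] has a neighbour [z] beyond the side [A] of a non-neighbour, the
   non-neighbours of [v] in [A] are still separated from all other vertices:
   an edge [x - y] leaving them would give an induced P4 [x - y - v - z]. *)
Lemma disconnected_on_setU1 (S : {set T}) v u :
  v \notin S -> u \in S -> ~~ R v u -> disconnected_on R S -> disconnected_on R (v |: S).
Proof.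
move=> vS uS nRvu [A0 sepA0].
have [A [[AS An BS sep] uA]] : exists A, separates R S A /\ u \in A.
  case uA0: (u \in A0); first by exists A0.
  by exists (S :\: A0); split; [exact: separatesC | rewrite inE uA0].
have vA : v \notin A by apply: contraNN vS => /(subsetP AS).
have svS : S \subset v |: S by exact: subsetUr.
case: (boolP [exists z in S :\: A, R v z]) => [/exists_inP[z zB Rvz] | /exists_inPn nRvB].
  exists [set y in A | ~~ R v y]; split.
  - by apply: subset_trans svS; apply/subsetP => y; rewrite inE => /andP[/(subsetP AS)].
  - by apply/set0Pn; exists u; rewrite inE uA.
  - by apply/set0Pn; exists v; rewrite !inE eqxx (negbTE vA).
  move=> x y; rewrite !inE => /andP[xA nRvx] /andP[yX /orP[/eqP-> | yS]].
    by rewrite Rsym.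
  case yA: (y \in A) in yX; last by apply: sep; rewrite // inE yA.
  move: yX; rewrite negbK => Rvy; apply/negP => Rxy; apply: RP4.
  have /negbTE nRxz : ~~ R x z by exact: sep.
  have /negbTE nRyz : ~~ R y z by exact: sep.
  have xv : x != v by apply: contraNneq vA => <-.
  have yv : y != v by apply: contraNneq vA => <-.
  have [xz yz] : x != z /\ y != z by split; apply: contraTneq zB => <-; rewrite inE ?xA ?yA.
  embed [:: x; y; v; z] Rsym Rirr.
exists (S :\: A); split=> //; first exact: subset_trans (subsetDl S A) svS.
  by apply/set0Pn; exists v; rewrite !inE eqxx (negbTE vS) andbF.
move=> x y xB; rewrite !inE => /andP[+ /orP[/eqP-> | yS]]; first by rewrite Rsym nRvB.
by rewrite yS andbT negbK => yA; rewrite Rsym sep.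
Qed.

End Separation.

Lemma P4_free_disconnected (T : finType) (R : rel T) :
  symmetric R -> irreflexive R -> ~ induced_sub P4 R ->
  forall S : {set T}, 1 < #|S| -> disconnected_on R S \/ disconnected_on (compl_rel R) S.
Proof.
move=> Rsym Rirr RP4 S; have [n] := ubnP #|S|; elim: n S => // n IHn S ltSn S2.
have [v vS] : exists v, v \in S by apply/set0Pn; rewrite -card_gt0 ltnW.
pose S' := S :\ v.
have vS' : v \notin S' by rewrite !inE eqxx.
have defS : S = v |: S' by rewrite setD1K.
have cardS' : #|S| = #|S'|.+1 by rewrite (cardsD1 v S) vS.
have SS' : S :\: S' = [set v] by rewrite setDDr setDv set0U; apply/setIidPr; rewrite sub1set.
have sepS' R' : (forall x, x \in S' -> ~~ R' x v) -> separates R' S S'.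
  move=> nR'v; split; rewrite ?subsetDl ?SS' //; first by rewrite -card_gt0 -ltnS -cardS'.
    by apply/set0Pn; exists v; rewrite set11.
  by move=> x _ xS' /set1P->; exact: nR'v.
case: (boolP [exists u in S', R v u]) => [/exists_inP[u uS' Rvu] | /exists_inPn nRv]; last first.
  by left; exists S'; apply: sepS' => x xS'; rewrite Rsym nRv.
case: (boolP [exists w in S', ~~ R v w]) => [/exists_inP[w wS' nRvw] | /exists_inPn Rv]; last first.
  by right; exists S'; apply: sepS' => x xS'; rewrite negb_compl_rel Rsym (negPn (Rv x xS')) orbT.
have S'2 : 1 < #|S'|.
  have wu : w != u by apply: contraNneq nRvw => ->.
  by rewrite (cardsD1 u) uS' ltnS card_gt0; apply/set0Pn; exists w; rewrite in_setD1 wu.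
rewrite defS; case: (IHn S' _ S'2) => [|sep|sep]; first by rewrite -ltnS -cardS'.
  by left; apply: disconnected_on_setU1 vS' wS' nRvw sep.
right; apply: (disconnected_on_setU1 (compl_rel_sym Rsym) (@compl_rel_irr _ R)
  (P4_free_compl Rirr RP4) vS' uS' _ sep).
by rewrite negb_compl_rel Rvu orbT.
Qed.

Lemma connected_not_disconnected (T : finType) (e : rel T) :
  symmetric e -> connected_graph e -> ~ disconnected_on e [set: T].
Proof.
move=> esym conn [A [_ /set0Pn[x xA] /set0Pn[y yB] sep]].
have clA : closed e (mem A).
  move=> u w euw; apply/idP/idP => [uA|wA]; apply/negPn/negP => nA.
    by move: (sep u w uA); rewrite !inE nA euw => /(_ isT).
  by move: (sep w u wA); rewrite !inE nA esym euw => /(_ isT).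
by move: yB; rewrite !inE -(closed_connect clA (conn x y)) xA.
Qed.

Lemma P4_free_co_split (T : finType) (e : rel T) (b b' : T) :
  symmetric e -> irreflexive e -> ~ induced_sub P4 e -> connected_graph e -> b != b' ->
  exists2 A, separates (compl_rel e) [set: T] A & b \in A.
Proof.
move=> esym eirr eP4 conn bb'.
have T2 : 1 < #|[set: T]|.
  by rewrite (cardsD1 b) inE ltnS card_gt0; apply/set0Pn; exists b'; rewrite !inE eq_sym bb'.
case: (P4_free_disconnected esym eirr eP4 T2) => [/(connected_not_disconnected esym conn)//|].
move=> [A sepA]; case bA: (b \in A); first by exists A.
exists (~: A); last by rewrite inE bA.
by rewrite -setTD; exact: separatesC (compl_rel_sym esym) _ _ sepA.
Qed.

Lemma separates_compl_adj (T : finType) (e : rel T) A x y :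
  separates (compl_rel e) [set: T] A -> x \in A -> y \notin A -> e x y.
Proof.
move=> [_ _ _ sep] xA yA; have xy : x != y by apply: contraNneq yA => <-.
by move: (sep x y xA); rewrite !inE yA /compl_rel xy negbK => /(_ isT).
Qed.

Lemma eq_coclique_join (T : finType) (e : rel T) (p : T -> nat) :
  symmetric e -> irreflexive e ->
  (forall x y, p x = 0 -> p y = 0 -> ~~ e x y) ->
  (forall x y, p x = 0 -> p y != 0 -> e x y) ->
  (forall x y, p x != 0 -> x != y -> p x = p y -> e x y) ->
  (forall x y, p x != 0 -> p y != 0 -> p x != p y -> ~~ e x y) ->
  e =2 coclique_join p.
Proof.
move=> esym eirr h00 h0 hsame hdiff x y; rewrite /coclique_join.
have [<-|xy] := eqVneq x y; first by rewrite eirr.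
case: (eqVneq (p x) 0) => [px|px]; case: (eqVneq (p y) 0) => [py|py] /=.
- by rewrite px py; exact/negbTE/h00.
- by rewrite px eq_sym py; exact: h0.
- by rewrite py px esym; exact: h0.
have [pxy|pxy] := eqVneq (p x) (p y); first exact: hsame.
exact/negbTE/hdiff.
Qed.

Definition universal (T : finType) (e : rel T) (x : T) : bool := [forall y, (y != x) ==> e x y].

Lemma universalPn (T : finType) (e : rel T) x :
  reflect (exists2 y, y != x & ~~ e x y) (~~ universal e x).
Proof.
apply: (iffP forallPn) => [[y]|[y yx nxy]]; first by rewrite negb_imply => /andP[]; exists y.
by exists y; rewrite yx.
Qed.

Lemma coclique_join_universal (T : finType) (e : rel T) :
  symmetric e -> irreflexive e ->
  (forall x y, ~~ universal e x -> ~~ universal e y -> ~~ e x y) ->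
  KT_coloured e (fun x => universal e x : nat).
Proof.
move=> esym eirr nuv; split=> [x|]; first by case: universal.
have adj x y : universal e x -> y != x -> e x y by move=> /forallP/(_ y)/implyP; apply.
right; apply: eq_coclique_join => // x y /=;
  case ux: (universal e x); case uy: (universal e y) => //=.
- by move=> _ _; apply: nuv; rewrite ?ux ?uy.
- by move=> _ _; rewrite esym; apply: adj => //; apply: contraFneq ux => ->.
- by move=> _ xy _; apply: adj; rewrite // eq_sym.
Qed.

Section TransitiveNonadjacency.
Variables (T : finType) (e : rel T).
Hypotheses (esym : symmetric e) (eirr : irreflexive e) (eK6 : ~ induced_sub K6_minus_M2 e).
Hypothesis ntrans : forall x y z, ~~ e x y -> ~~ e y z -> ~~ e x z.

Lemma nonadj_twins u w : ~~ e u w -> e u =1 e w.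
Proof.
move=> nuw v; apply/idP/idP => [euv|ewv]; apply/negPn/negP => nv.
  by move: (ntrans nuw nv); rewrite euv.
have nwu : ~~ e w u by rewrite esym.
by move: (ntrans nwu nv); rewrite ewv.
Qed.

Variables (x y x' y' : T).
Hypotheses (exy : e x y) (xx' : x' != x) (yy' : y' != y) (nxx' : ~~ e x x') (nyy' : ~~ e y y').

Lemma common_neighbours_nonadj u v : e u x -> e u y -> e v x -> e v y -> ~~ e u v.
Proof.
move=> eux euy evx evy; apply/negP => euv; apply: eK6.
have tx := nonadj_twins nxx'; have ty := nonadj_twins nyy'.
have ex'y : e x' y by rewrite -tx.
have exy' : e x y' by rewrite esym -ty esym.
have ex'y' : e x' y' by rewrite -tx.
have eux' : e u x' by rewrite esym -tx esym.
have euy' : e u y' by rewrite esym -ty esym.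
have evx' : e v x' by rewrite esym -tx esym.
have evy' : e v y' by rewrite esym -ty esym.
embed [:: x; x'; y; y'; u; v] esym eirr.
Qed.

Definition adjacent_pair_colouring (w : T) : nat :=
  if ~~ e w x then 0 else if ~~ e w y then 1 else 2.

Lemma KT_coloured_adjacent_pair : KT_coloured e adjacent_pair_colouring.
Proof.
split=> [w|]; first by rewrite /adjacent_pair_colouring; do 2?case: ifP.
left=> u v; rewrite /multipartite -[e u v]negbK; congr negb.
apply/idP/eqP => [/nonadj_twins tw | ]; first by rewrite /adjacent_pair_colouring !tw.
rewrite /adjacent_pair_colouring.
case: (boolP (e u x)) => eux; case: (boolP (e v x)) => evx;
  case: (boolP (e u y)) => euy; case: (boolP (e v y)) => evy //= _.
- exact: common_neighbours_nonadj.
- by apply: (ntrans euy); rewrite esym.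
all: by apply: (ntrans eux); rewrite esym.
Qed.

End TransitiveNonadjacency.

Section CoP3.
Variables (T : finType) (e : rel T).
Hypotheses (esym : symmetric e) (eirr : irreflexive e).
Hypotheses (eP4 : ~ induced_sub P4 e) (eK5 : ~ induced_sub K5_minus_S2 e)
  (eF4 : ~ induced_sub F2_4 e) (eF5 : ~ induced_sub F2_5 e).
Variables (A : {set T}) (a b c : T).
Hypotheses (sepA : separates (compl_rel e) [set: T] A) (bA : b \in A).
Hypotheses (nab : ~~ e a b) (nbc : ~~ e b c) (eac : e a c).

Local Notation nadj := (compl_rel e).

Let nadj_sym : symmetric nadj := compl_rel_sym esym.
Let adj_across x y : x \in A -> y \notin A -> e x y := separates_compl_adj sepA.

Let mem_nonadj x y : x \in A -> ~~ e x y -> y \in A.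
Proof. by move=> xA; apply: contraNT => yA; exact: adj_across. Qed.

Let exists_outside : exists o, o \notin A.
Proof. by case: sepA => _ _ /set0Pn[o]; rewrite setTD inE; exists o. Qed.

Let aA : a \in A. Proof. by apply: mem_nonadj bA _; rewrite esym. Qed.
Let cA : c \in A. Proof. exact: mem_nonadj bA nbc. Qed.

Let ab : a != b. Proof. by apply: contraTneq eac => ->. Qed.
Let bc : b != c. Proof. by apply: contraTneq eac => <-. Qed.
Let nadj_ab : nadj a b. Proof. by rewrite /compl_rel ab. Qed.
Let nadj_cb : nadj c b. Proof. by rewrite /compl_rel eq_sym bc esym. Qed.

Lemma no_edge_joined_abc y z : e y z ->
  e y a -> e y b -> e y c -> e z a -> e z b -> e z c -> False.
Proof.
move=> eyz eya eyb eyc eza ezb ezc; apply: eK5.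
embed [:: a; b; c; y; z] esym eirr.
Qed.

Lemma no_common_neighbour_in_A y : y \in A -> e y a -> e y b -> e y c -> False.
Proof.
move=> yA eya eyb eyc; have [o oA] := exists_outside.
have eo u : u \in A -> e o u by move=> uA; rewrite esym adj_across.
apply: (@no_edge_joined_abc y o) => //; first exact: adj_across.
- exact: eo aA.
- exact: eo bA.
- exact: eo cA.
Qed.

Definition indep3 x y z := [/\ nadj x y, nadj y z & nadj x z].

(* A vertex missing one vertex of an independent triple of [A] misses all of
   it: otherwise a vertex outside [A] completes an induced [F2_5] or [F2_4]. *)
Lemma indep3_nadj x y z v : x \in A -> indep3 x y z -> nadj v x -> v != y -> v != z -> nadj v y.
Proof.
move=> xA [/andP[xy nxy] /andP[yz nyz] /andP[xz nxz]] /andP[vx nvx] vy vz.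
rewrite /compl_rel vy /=; apply/negP => evy.
have [o oA] := exists_outside.
have vA : v \in A by apply: mem_nonadj xA _; rewrite esym.
have yA := mem_nonadj xA nxy; have zA := mem_nonadj xA nxz.
have exo := adj_across xA oA; have eyo := adj_across yA oA.
have ezo := adj_across zA oA; have evo := adj_across vA oA.
case: (boolP (e v z)) => [evz | nvz].
  by apply: eF5; embed [:: y; v; z; o; x] esym eirr.
by apply: eF4; embed [:: x; v; y; o; z] esym eirr.
Qed.

Definition in_indep3 w := exists y z, indep3 w y z.

Lemma indep3_grow v w : w \in A -> in_indep3 w -> nadj v w -> exists s, indep3 v w s.
Proof.
move=> wA [y [z t]] vw; have [wy yz wz] := t.
have [->|vy] := eqVneq v y; first by exists z; split; rewrite // nadj_sym.
have [->|vz] := eqVneq v z; first by exists y; split; rewrite // nadj_sym.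
by exists y; split; last exact: indep3_nadj t vw vy vz.
Qed.

Lemma not_in_indep3_b : ~ in_indep3 b.
Proof.
move=> tb; have [s [_ nbs nas]] := indep3_grow bA tb nadj_ab.
have ca : c != a by apply: contraTneq eac => ->; rewrite eirr.
have cs : c != s by apply: contraTneq nas => <-; rewrite /compl_rel negb_and eac orbT.
have ba : nadj b a by rewrite nadj_sym nadj_ab.
have := indep3_nadj bA (And3 ba nas nbs) nadj_cb ca cs.
by rewrite /compl_rel esym eac andbF.
Qed.

Lemma no_indep3 x y z : x \in A -> ~ indep3 x y z.
Proof.
move=> xA t; have tx : in_indep3 x by exists y, z.
have adj w : w \in A -> ~ in_indep3 w -> e x w.
  move=> wA nw; apply/negPn/negP => nxw; apply: nw.
  have [->|wx] := eqVneq w x; first exact: tx.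
  have nwx : nadj w x by rewrite /compl_rel wx esym.
  by have [s ?] := indep3_grow xA tx nwx; exists x, s.
have near_b w : w \in A -> nadj w b -> ~ in_indep3 w.
  move=> wA wb tw; apply: not_in_indep3_b.
  have nbw : nadj b w by rewrite nadj_sym.
  by have [s ?] := indep3_grow wA tw nbw; exists w, s.
apply: (no_common_neighbour_in_A xA); apply: adj.
- exact: aA.
- exact: near_b aA nadj_ab.
- exact: bA.
- exact: not_in_indep3_b.
- exact: cA.
- exact: near_b cA nadj_cb.
Qed.

Lemma outside_nonadj x y : x \notin A -> y \notin A -> ~~ e x y.
Proof.
move=> xA yA; apply/negP => exy.
have ex u : u \in A -> e x u by move=> uA; rewrite esym adj_across.
have ey u : u \in A -> e y u by move=> uA; rewrite esym adj_across.
exact: no_edge_joined_abc exy (ex _ aA) (ex _ bA) (ex _ cA) (ey _ aA) (ey _ bA) (ey _ cA).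
Qed.

Lemma nadj_b_clique x y : x \in A -> nadj x b -> nadj y b -> x != y -> e x y.
Proof.
move=> xA xb yb xy; apply/negPn/negP => nxy.
by apply: (no_indep3 (y := y) (z := b) xA); split; rewrite // /compl_rel xy.
Qed.

Lemma nadj_of_adj_b u : u \in A -> e u b -> exists2 w, nadj w b & nadj u w.
Proof.
move=> uA eub; case: (boolP (e u a)) => eua; last first.
  exists a; first exact: nadj_ab.
  by rewrite /compl_rel eua andbT; apply: contraTneq eub => ->.
case: (boolP (e u c)) => euc; last first.
  exists c; first exact: nadj_cb.
  by rewrite /compl_rel euc andbT; apply: contraTneq eub => ->; rewrite esym.
by case: (no_common_neighbour_in_A uA eua eub euc).
Qed.

Lemma nadj_b_nonadj x y : x \in A -> y \in A -> nadj x b -> ~~ nadj y b -> ~~ e x y.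
Proof.
move=> xA yA xb; rewrite negb_compl_rel => /orP[/eqP-> | eyb]; first by case/andP: xb.
apply/negP => exy; have [w wb yw] := nadj_of_adj_b yA eyb.
have xw : x != w by apply: contraTneq exy => ->; case/andP: yw => _; rewrite esym.
have exw := nadj_b_clique xA xb wb xw.
case/andP: xb => xb nxb; case/andP: wb => wb nwb; case/andP: yw => yw nyw.
by apply: eP4; embed [:: b; y; x; w] esym eirr.
Qed.

Lemma not_nadj_b_clique x y : x \in A -> y \in A -> ~~ nadj x b -> ~~ nadj y b -> x != y -> e x y.
Proof.
move=> xA yA; rewrite !negb_compl_rel => /orP[/eqP-> | exb] /orP[/eqP-> | eyb] xy //.
- by rewrite eqxx in xy.
- by rewrite esym.
apply/negPn/negP => nxy; have [w wb xw] := nadj_of_adj_b xA exb.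
have yw : y != w by apply: contraTneq eyb => ->; case/andP: wb.
have eyw : e y w.
  apply/negPn/negP => nyw; apply: (no_indep3 (y := y) (z := w) xA).
  by split; rewrite // /compl_rel ?xy ?yw.
case/andP: wb => wb nwb; case/andP: xw => xw nxw.
by apply: eP4; embed [:: w; y; b; x] esym eirr.
Qed.

Definition coP3_colouring (z : T) : nat := if z \in A then (if nadj z b then 2 else 1) else 0.

Lemma KT_coloured_coP3 : KT_coloured e coP3_colouring.
Proof.
have col0 z : (coP3_colouring z == 0) = (z \notin A).
  by rewrite /coP3_colouring; case: (z \in A) => //; case: ifP.
split=> [z|]; first by rewrite /coP3_colouring; do 2?case: ifP.
right; apply: eq_coclique_join => // x y.
- by move=> /eqP; rewrite col0 => xA /eqP; rewrite col0; exact: outside_nonadj.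
- by move=> /eqP; rewrite !col0 negbK => xA yA; rewrite esym adj_across.
- rewrite col0 negbK => xA xy; rewrite /coP3_colouring xA.
  case yA: (y \in A); last by case: ifP.
  case: (boolP (nadj x b)) => xb; case: (boolP (nadj y b)) => yb //= _.
    exact: nadj_b_clique.
  exact: not_nadj_b_clique.
rewrite !col0 !negbK => xA yA; rewrite /coP3_colouring xA yA.
case: (boolP (nadj x b)) => xb; case: (boolP (nadj y b)) => yb //= _.
  exact: nadj_b_nonadj.
by rewrite esym; exact: nadj_b_nonadj.
Qed.

End CoP3.

Theorem theorem4p3 (T : finType) (e : rel T) :
  symmetric e -> irreflexive e -> connected_graph e ->
  (F2_free e <->
   exists m n o : nat, induced_sub e (Kmno m n o) \/ induced_sub e (Tjoin n m o)).
Proof.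
move=> esym eirr conn; split; last by move=> /Kmno_TjoinP[p /KT_coloured_F2_free].
move=> [eP4 [eK5 [eK6 [eF4 eF5]]]]; apply/Kmno_TjoinP.
case: (boolP [exists x, exists y, [&& ~~ universal e x, ~~ universal e y & e x y]]);
  last first.
  move=> /existsPn nuv; exists (fun x => universal e x : nat).
  apply: coclique_join_universal => // x y ux uy; apply: contraNN (nuv x) => exy.
  by apply/existsP; exists y; rewrite ux uy exy.
move=> /existsP[x /existsP[y /and3P[/universalPn[x' xx' nxx'] /universalPn[y' yy' nyy'] exy]]].
case: (boolP [exists a, exists b, exists c, [&& ~~ e a b, ~~ e b c & e a c]]).
  move=> /existsP[a /existsP[b /existsP[c /and3P[nab nbc eac]]]].
  have ba : b != a by apply: contraTneq eac => <-.
  have [A sepA bA] := P4_free_co_split esym eirr eP4 conn ba.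
  by exists (coP3_colouring e A b); apply: KT_coloured_coP3 sepA bA nab nbc eac.
move=> /existsPn noP3; exists (adjacent_pair_colouring e x y).
apply: KT_coloured_adjacent_pair exy xx' yy' nxx' nyy' => // u v w nuv nvw.
apply/negP => euw; have /existsPn/(_ v)/existsPn/(_ w) := noP3 u.
by rewrite nuv nvw euw.
Qed.
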